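(* Let $\mathcal{Y}=\mathbb{R}$, $K\ge1$, $\alpha\in(0,1)$, let $(q_1,\dots,q_K)$ be a probability vector, and let $n_1,\dots,n_K\ge0$ be fixed integers with $n=\sum_k n_k$. For distributions $\Pi_1,\dots,\Pi_K$ on $\mathcal{X}^1\times\mathbb{R}$, consider calibration data $(X_1,Y_1),\dots,(X_n,Y_n)$ generated independently with, for each $k$ and each $i\in\{n_1+\dots+n_{k-1}+1,\dots,n_1+\dots+n_k\}$, $X_i^0=k$ and $(X_i^1,Y_i)\sim\Pi_k$, and an independent test point $(X_{n+1},Y_{n+1})$ with $\mathbb{P}\{X^0_{n+1}=k\}=q_k$ and $(X^1_{n+1},Y_{n+1})\mid X^0_{n+1}=k\sim\Pi_k$. Let $\widehat{C}_n$ be a prediction set procedure (a set $\widehat{C}_n(x)\subseteq\mathbb{R}$ constructed from the calibration data for each $x$) satisfying the distribution-free coverage guarantee $\mathbb{P}\{Y_{n+1}\in\widehat{C}_n(X_{n+1})\}\ge1-\alpha$ under this data-generating model for every choice of $\Pi_1,\dots,\Pi_K$. If $\sum_{k:\,n_k=0}q_k>\alpha$, then (for any $\Pi_1,\dots,\Pi_K$) $\mathbb{E}[\textnormal{Leb}(\widehat{C}_n(X_{n+1}))]=\infty$.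
   Context: Features are $x=(x^0,x^1)\in[K]\times\mathcal{X}^1$ with $x^0$ the group label. $\textnormal{Leb}$ denotes Lebesgue measure on $\mathbb{R}$. *)

From HB Require Import structures.
From mathcomp Require Import all_boot all_order all_algebra.
From mathcomp Require Import all_classical all_reals all_analysis.
Import Order.TTheory GRing.Theory Num.Theory.
Import numFieldNormedType.Exports.

Set Implicit Arguments.
Unset Strict Implicit.
Unset Printing Implicit Defensive.

Local Open Scope classical_set_scope.
Local Open Scope ring_scope.

Section conformal_model.
Variables (R : realType) (d1 : measure_display) (X1 : measurableType d1).
Variables (K : nat) (nk : 'I_K -> nat).

Definition ncal : nat := (\sum_(k < K) nk k)%N.

(** calibration index i (0-based) belongs to group k (0-based) iff
    n_1 + ... + n_{k-1} <= i < n_1 + ... + n_k *)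
Definition in_group (k : 'I_K) (i : nat) : bool :=
  ((\sum_(j < K | (j < k)%N) nk j <= i)
   && (i < \sum_(j < K | (j <= k)%N) nk j))%N.

Lemma K_gt0_of_cal (i : 'I_ncal) : (0 < K)%N.
Proof.
case: i => i; rewrite /ncal; case: K nk => [|K'] f //.
by rewrite big_ord0.
Qed.

(** the (deterministic) group label X^0_i of the calibration point i; the
    default branch is never taken since the groups partition [0, n) *)
Definition group_of (i : 'I_ncal) : 'I_K :=
  match [pick k | in_group k i] with
  | Some k => k
  | None => Ordinal (K_gt0_of_cal i)
  end.

(** a full calibration data set ((X_i^0, X_i^1), Y_i)_{i} *)
Definition caldata := 'I_ncal -> ('I_K * X1) * R.

Definition procedure := caldata -> ('I_K * X1) -> set R.

(** calibration data as a function of the (X^1_i, Y_i)'s, group labels being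
    fixed by the design *)
Definition lift_data (z : 'I_ncal -> X1 * R) : caldata :=
  fun i => ((group_of i, (z i).1), (z i).2).

(** joint measurability of the procedure (implicit regularity assumption) *)
Definition procedure_measurable (C : procedure) : Prop :=
  forall k : 'I_K,
    measurable [set p : (ncal.-tuple (X1 * R)%type * (X1 * R)%type)%type |
                C (lift_data (fun i => tnth p.1 i)) (k, p.2.1) p.2.2].

Section on_space.
Variables (dO : measure_display) (O : measurableType dO) (P : probability O R).

(** mutual independence of the n calibration pairs Z_i = (X^1_i, Y_i) and of
    the test point (X^0_{n+1}, (X^1_{n+1}, Y_{n+1})) = (G, Z0): product rule on
    all (generating) measurable rectangles *)
Definition mutually_independent (Z : 'I_ncal -> O -> X1 * R)
    (G : O -> 'I_K) (Z0 : O -> X1 * R) : Prop :=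
  forall (A : 'I_ncal -> set (X1 * R)%type) (S : set 'I_K) (B : set (X1 * R)%type),
    (forall i, measurable (A i)) -> measurable B ->
    P ((\bigcap_(i in [set: 'I_ncal]) (Z i @^-1` A i))
        `&` (G @^-1` S `&` Z0 @^-1` B))
    = ((\prod_(i < ncal) P (Z i @^-1` A i)) * P (G @^-1` S `&` Z0 @^-1` B))%E.

Definition data_model (Pi : 'I_K -> probability (X1 * R)%type R) (q : 'I_K -> R)
    (Z : 'I_ncal -> O -> X1 * R) (G : O -> 'I_K) (Z0 : O -> X1 * R) : Prop :=
  [/\ (forall i, measurable_fun setT (Z i)),
      (forall k, measurable (G @^-1` [set k])) /\ measurable_fun setT Z0,
      (forall i A, measurable A -> P (Z i @^-1` A) = Pi (group_of i) A),
      (forall k B, measurable B ->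
         P (G @^-1` [set k] `&` Z0 @^-1` B) = ((q k)%:E * Pi k B)%E)
    & mutually_independent Z G Z0].

End on_space.
End conformal_model.

From HB Require Import structures.
From mathcomp Require Import all_boot all_order all_algebra.
From mathcomp Require Import all_classical all_reals all_analysis.
From mathcomp Require Import measurable_realfun zify.
Import Order.TTheory GRing.Theory Num.Theory.
Import numFieldNormedType.Exports.
Local Open Scope classical_set_scope.
Local Open Scope ring_scope.

(* By Tonelli, E[Leb(C(X_{n+1}))] is the integral over y in R of
   P{y \in C(X_{n+1})}, so it suffices to bound this probability below by
   s - alpha > 0, where s is the total mass q_k of the groups with n_k = 0.
   Fix y and replace the test response of every such group by the constant y:
   the calibration data, hence C, are unaffected, so the coverage guarantee
   still applies to the modified model, and it gives
   1 - alpha <= P{n_(X^0_{n+1}) > 0} + P{y \in C(X_{n+1})}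
             = 1 - s + P{y \in C(X_{n+1})}. *)

Lemma lebesgue_measureT (R : realType) : (lebesgue_measure [set: R] = +oo)%E.
Proof.
by have := lebesgue_measure_itv (`]-oo, +oo[ : interval R); rewrite set_itvNyy.
Qed.

Lemma integral_ge_cst_pinfty {d} {T : measurableType d} {R : realType}
    {mu : {measure set T -> \bar R}} {g : T -> \bar R} {c : R} :
  mu [set: T] = +oo%E -> 0 < c -> measurable_fun [set: T] g ->
  (forall x, c%:E <= g x)%E -> (\int[mu]_x g x = +oo)%E.
Proof.
move=> muT c_gt0 mg cg; apply/eqP; rewrite eq_le leey /=.
have <- : (\int[mu]_(x in [set: T]) c%:E = +oo)%E.
  by rewrite integral_cst // muT muleC gt0_mulye ?lte_fin.
by apply: ge0_le_integral => // x _; rewrite lee_fin ltW.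
Qed.

Lemma integral_xsection_ysection d1 d2 (T1 : measurableType d1)
    (T2 : measurableType d2) (R : realType)
    (m1 : {sigma_finite_measure set T1 -> \bar R})
    (m2 : {sigma_finite_measure set T2 -> \bar R}) (A : set (T1 * T2)) :
  measurable A ->
  (\int[m1]_x m2 (xsection A x) = \int[m2]_y m1 (ysection A y))%E.
Proof.
move=> mA; have := indic_fubini_tonelli m1 m2 mA.
by rewrite indic_fubini_tonelli_FE // indic_fubini_tonelli_GE.
Qed.

Lemma measurable_preimageT d d' (T : measurableType d) (U : measurableType d')
    (f : T -> U) (B : set U) :
  measurable_fun setT f -> measurable B -> measurable (f @^-1` B).
Proof. by move=> mf mB; rewrite -[X in measurable X]setTI; exact: mf. Qed.

Section calibration_groups.
Context {K : nat} {nk : 'I_K -> nat}.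

Lemma sum_ord_leq_ltn (k : 'I_K) :
  (\sum_(j < K | (j <= k)%N) nk j = \sum_(j < K | (j < k)%N) nk j + nk k)%N.
Proof.
rewrite (bigD1 k) //= addnC; congr (_ + _)%N.
by apply: eq_bigl => j; rewrite ltn_neqAle -val_eqE andbC.
Qed.

Lemma in_group_nk_gt0 (k : 'I_K) (i : nat) : in_group nk k i -> (0 < nk k)%N.
Proof. by rewrite /in_group sum_ord_leq_ltn => /andP[]; lia. Qed.

Lemma in_group_exists {i : nat} : (i < ncal nk)%N -> exists k, in_group nk k i.
Proof.
move=> lt_i_n.
suff /(_ K (leqnn K)) : forall m, (m <= K)%N ->
    (i < \sum_(j < K | (j < m)%N) nk j)%N -> exists k, in_group nk k i.
  by apply; rewrite (eq_bigl xpredT) // => j; rewrite ltn_ord.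
elim=> [|m IHm] lt_mK; first by rewrite big_pred0 // => j; rewrite ltn0.
have [lt_i_m|le_m_i] := ltnP i (\sum_(j < K | (j < m)%N) nk j).
  by move=> _; exact: IHm (ltnW lt_mK) lt_i_m.
move=> lt_i_mS; exists (Ordinal lt_mK).
by rewrite /in_group /= le_m_i.
Qed.

Lemma in_group_of (i : 'I_(ncal nk)) : in_group nk (group_of i) i.
Proof.
rewrite /group_of; case: pickP => [k //|no_k].
by have [k] := in_group_exists (ltn_ord i); rewrite no_k.
Qed.

Lemma nk_group_of_gt0 (i : 'I_(ncal nk)) : (0 < nk (group_of i))%N.
Proof. exact/in_group_nk_gt0/in_group_of. Qed.

End calibration_groups.

Section label_partition.
Context {d : measure_display} {T : measurableType d} {R : realType} {K : nat}
  {G : T -> 'I_K}.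
Hypothesis mG : forall k, measurable (G @^-1` [set k]).

Lemma measurable_label_preimage (S : set 'I_K) : measurable (G @^-1` S).
Proof.
have -> : G @^-1` S = \bigcup_(k in S) G @^-1` [set k].
  by apply/seteqP; split=> [w Sw|w [k Sk /= ->]] //; exists (G w).
exact: fin_bigcup_measurable.
Qed.

Lemma measure_label_partition (mu : {measure set T -> \bar R}) (E : set T) :
  measurable E -> mu E = (\sum_(k < K) mu (E `&` G @^-1` [set k]))%E.
Proof.
move=> mE; rewrite -measure_bigsetU_ord; last 2 first.
- by move=> k; exact: measurableI.
- apply/trivIsetP => k l _ _ kl; apply/seteqP; split=> w // [[_ Gk] [_ Gl]].
  by move: kl; rewrite -Gk -Gl eqxx.
congr (mu _); apply/seteqP; split=> [w Ew|].
  by rewrite (bigD1 (G w)) //=; left.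
by apply: (big_ind (fun A => A `<=` E)) => // A B AE BE; rewrite subUset.
Qed.

Lemma probability_label_pred {P : probability T R} {q : 'I_K -> R}
    (p : pred 'I_K) :
  (forall k, P (G @^-1` [set k]) = (q k)%:E) ->
  P (G @^-1` [set k | p k]) = (\sum_(k < K | p k) q k)%:E.
Proof.
move=> PG; rewrite (measure_label_partition _ _ (measurable_label_preimage _)).
rewrite -sumEFin [RHS]big_mkcond; apply: eq_bigr => k _.
case: ifPn => [pk|npk].
  by rewrite -PG; congr (P _); apply/seteqP; split=> [w [] | w /= ->].
rewrite -(measure0 P); congr (P _); apply/seteqP; split=> w // [/= pw kw].
by move: npk; rewrite -kw pw.
Qed.

End label_partition.

Section coverage_measurability.
Context {R : realType} {d1 : measure_display} {X1 : measurableType d1}.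
Context {K : nat} {nk : 'I_K -> nat} {C : procedure R X1 nk}.
Hypothesis mC : procedure_measurable C.

Lemma measurable_coverage {d} {T : measurableType d}
    (Zs : 'I_(ncal nk) -> T -> X1 * R) (Gs : T -> 'I_K) (V : T -> X1 * R) :
  (forall i, measurable_fun setT (Zs i)) ->
  (forall k, measurable (Gs @^-1` [set k])) -> measurable_fun setT V ->
  measurable [set t | C (lift_data (fun i => Zs i t)) (Gs t, (V t).1) (V t).2].
Proof.
move=> mZs mGs mV.
pose data t := ([tuple Zs i t | i < ncal nk], V t).
have mdata : measurable_fun setT data.
  apply: measurable_fun_pair => //.
  apply/measurable_fun_tnthP => i; rewrite /comp.
  by under eq_fun do rewrite tnth_mktuple; exact: mZs.
have -> : [set t | C (lift_data (fun i => Zs i t)) (Gs t, (V t).1) (V t).2] =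
    \bigcup_(k in [set: 'I_K]) (Gs @^-1` [set k] `&` data @^-1`
      [set p | C (lift_data (fun i => tnth p.1 i)) (k, p.2.1) p.2.2]).
  apply/seteqP; split=> [t Ct|t [k _ [/= <-]]].
    by exists (Gs t) => //; split=> //=; under eq_fun do rewrite tnth_mktuple.
  by under eq_fun do rewrite tnth_mktuple.
apply: fin_bigcup_measurable => // k _; apply: measurableI => //.
exact: measurable_preimageT.
Qed.

End coverage_measurability.

Section relabel_test_point.
Context {R : realType} {d1 : measure_display} {X1 : measurableType d1}.
Context {K : nat} {nk : 'I_K -> nat}.
Context {dO : measure_display} {O : measurableType dO} {P : probability O R}.
Context {Pi : 'I_K -> probability (X1 * R)%type R} {q : 'I_K -> R}.
Context {Z : 'I_(ncal nk) -> O -> X1 * R} {G : O -> 'I_K} {Z0 : O -> X1 * R}.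
Hypothesis model : data_model P Pi q Z G Z0.

Lemma data_model_label (k : 'I_K) : P (G @^-1` [set k]) = (q k)%:E.
Proof.
case: model => _ _ _ PGZ0 _; have := PGZ0 k setT measurableT.
by rewrite preimage_setT setIT probability_setT mule1.
Qed.

Variable f : 'I_K -> {mfun (X1 * R)%type >-> (X1 * R)%type}.
Hypothesis f_cal : forall (i : 'I_(ncal nk)) p, f (group_of i) p = p.

Lemma relabel_fiber (S : set 'I_K) (B : set (X1 * R)%type) (k : 'I_K) :
  G @^-1` S `&` (fun w => f (G w) (Z0 w)) @^-1` B `&` G @^-1` [set k] =
  G @^-1` (S `&` [set k]) `&` Z0 @^-1` (f k @^-1` B).
Proof. by apply/seteqP; split=> w /= [[? ?] ?]; subst k. Qed.

Lemma measurable_relabel : measurable_fun setT (fun w => f (G w) (Z0 w)).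
Proof.
case: model => _ [mG mZ0] _ _ _ _ B mB; rewrite setTI.
have -> : (fun w => f (G w) (Z0 w)) @^-1` B = \bigcup_(k in [set: 'I_K])
    (G @^-1` setT `&` (fun w => f (G w) (Z0 w)) @^-1` B `&` G @^-1` [set k]).
  by apply/seteqP; split=> [w Bw|w [k _ [[_ Bw] _]]] //; exists (G w).
apply: fin_bigcup_measurable => // k _; rewrite relabel_fiber.
apply: measurableI; first exact: measurable_label_preimage.
by apply: measurable_preimageT => //; exact: measurable_funPTI.
Qed.

Lemma data_model_relabel :
  data_model P (fun k => distribution (Pi k) (f k)) q Z G
    (fun w => f (G w) (Z0 w)).
Proof.
have [mZ [mG _] PZ PGZ0 indep] := model.
have mZ0f := measurable_relabel.
split=> //.
- move=> i A mA; rewrite PZ //=; congr (Pi _ _).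
  by apply/seteqP; split=> p /=; rewrite f_cal.
- move=> k B mB; rewrite /= -PGZ0; last exact: measurable_funPTI.
  by congr (P _); apply/seteqP; split=> w /= [Gk]; rewrite Gk.
move=> A S B mA mB.
set Ac := \bigcap_(i in _) _.
have mAc : measurable Ac.
  by apply: fin_bigcap_measurable => // i _; exact: measurable_preimageT.
have mE : measurable (G @^-1` S `&` (fun w => f (G w) (Z0 w)) @^-1` B).
  apply: measurableI; first exact: measurable_label_preimage.
  exact: measurable_preimageT.
rewrite (measure_label_partition mG _ _ (measurableI _ _ mAc mE)).
rewrite (measure_label_partition mG _ _ mE) ge0_sume_distrr //.
apply: eq_bigr => k _; rewrite -[in LHS]setIA !relabel_fiber.
by apply: indep => //; exact: measurable_funPTI.
Qed.

End relabel_test_point.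

Section pin_response.
Context {R : realType} {d1 : measure_display} {X1 : measurableType d1}.
Context {K : nat}.
Variables (nk : 'I_K -> nat) (y : R) (k : 'I_K).

Definition pin_response (p : X1 * R) : X1 * R :=
  if nk k == 0%N then (p.1, y) else p.

Lemma measurable_pin_response : measurable_fun setT pin_response.
Proof.
rewrite /pin_response; case: (nk k == 0%N); last exact: measurable_id.
exact: measurable_fun_pair.
Qed.

HB.instance Definition _ :=
  isMeasurableFun.Build _ _ _ _ pin_response measurable_pin_response.

End pin_response.

Section coverage_lower_bound.
Context {R : realType} {d1 : measure_display} {X1 : measurableType d1}.
Context {K : nat} {nk : 'I_K -> nat} {alpha : R} {q : 'I_K -> R}.
Context {C : procedure R X1 nk}.
Hypothesis q_sum1 : \sum_(k < K) q k = 1.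
Hypothesis mC : procedure_measurable C.
Hypothesis coverage :
  forall (Pi : 'I_K -> probability (X1 * R)%type R)
         (dO : measure_display) (O : measurableType dO) (P : probability O R)
         (Z : 'I_(ncal nk) -> O -> X1 * R) (G : O -> 'I_K) (Z0 : O -> X1 * R),
    data_model P Pi q Z G Z0 ->
    ((1 - alpha)%:E <=
       P [set w | C (lift_data (fun i => Z i w)) (G w, (Z0 w).1) (Z0 w).2])%E.
Context {Pi : 'I_K -> probability (X1 * R)%type R}.
Context {dO : measure_display} {O : measurableType dO} {P : probability O R}.
Context {Z : 'I_(ncal nk) -> O -> X1 * R} {G : O -> 'I_K} {Z0 : O -> X1 * R}.
Hypothesis model : data_model P Pi q Z G Z0.

Definition coverage_graph : set (O * R)%type :=
  [set wy | C (lift_data (fun i => Z i wy.1)) (G wy.1, (Z0 wy.1).1) wy.2].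

Lemma xsection_coverage_graph (w : O) :
  xsection coverage_graph w = C (lift_data (fun i => Z i w)) (G w, (Z0 w).1).
Proof. by apply/seteqP; split=> y; rewrite /xsection /= inE. Qed.

Lemma measurable_coverage_graph : measurable coverage_graph.
Proof.
have [mZ [mG mZ0] _ _ _] := model.
apply: (measurable_coverage mC (fun i wy => Z i wy.1) (fun wy => G wy.1)
  (fun wy => ((Z0 wy.1).1, wy.2))).
- by move=> i; exact: measurableT_comp.
- move=> k; have -> : (fun wy : O * R => G wy.1) @^-1` [set k] =
      G @^-1` [set k] `*` setT by apply/seteqP; split=> wy /=; [move=> ->|case].
  exact: measurableX.
- apply: measurable_fun_pair => //.
  by apply: measurableT_comp => //; exact: measurableT_comp.
Qed.

Lemma coverage_ysection_ge (y : R) :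
  ((\sum_(k < K | nk k == 0%N) q k - alpha)%:E <=
     P (ysection coverage_graph y))%E.
Proof.
have [_ [mG _] _ _ _] := model.
have pin_cal (i : 'I_(ncal nk)) (p : X1 * R) :
    pin_response nk y (group_of i) p = p.
  by rewrite /pin_response (negbTE (lt0n_neq0 (nk_group_of_gt0 i))).
have model_pin := data_model_relabel model
  (fun k => pin_response nk y k : {mfun _ >-> _}) pin_cal.
have := coverage _ _ _ _ _ _ _ model_pin.
set W := [set w | _].
have mW : measurable W.
  have [mZ [_ mZpin] _ _ _] := model_pin.
  exact: measurable_coverage.
have W_sub : W `<=` G @^-1` [set k | nk k != 0%N] `|` ysection coverage_graph y.
  move=> w; rewrite /W /= /pin_response.
  by case: eqP => [_ Cw|/eqP nk_ne0 _]; [right; rewrite /ysection /= inE|left].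
have mN := measurable_label_preimage mG [set k | nk k != 0%N].
have mY := measurable_ysection y measurable_coverage_graph.
have mNY := measurableU _ _ mN mY.
move=> /le_trans /(_ (le_measure _ (mem_set mW) (mem_set mNY) W_sub)).
move=> /le_trans /(_ (measureU2 _ mN mY)).
have /= -> :=
  probability_label_pred mG (fun k => nk k != 0%N) (data_model_label model).
have -> : 1 - alpha = \sum_(k < K | nk k != 0%N) q k +
    (\sum_(k < K | nk k == 0%N) q k - alpha).
  by rewrite -q_sum1 (bigID (fun k => nk k == 0%N)) /= addrCA addrA.
by rewrite EFinD leeD2lE.
Qed.

End coverage_lower_bound.

Theorem proposition1 (R : realType) (d1 : measure_display) (X1 : measurableType d1)
    (K : nat) (nk : 'I_K -> nat) (alpha : R) (q : 'I_K -> R)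
    (C : procedure R X1 nk) :
  (0 < K)%N ->
  0 < alpha < 1 ->
  (forall k, 0 <= q k) -> \sum_(k < K) q k = 1 ->
  procedure_measurable C ->
  (* distribution-free coverage guarantee: for every Pi_1..Pi_K and every
     realization of the data-generating model *)
  (forall (Pi : 'I_K -> probability (X1 * R)%type R)
          (dO : measure_display) (O : measurableType dO) (P : probability O R)
          (Z : 'I_(ncal nk) -> O -> X1 * R) (G : O -> 'I_K) (Z0 : O -> X1 * R),
      data_model P Pi q Z G Z0 ->
      ((1 - alpha)%:E <=
         P [set w | C (lift_data (fun i => Z i w)) (G w, (Z0 w).1) (Z0 w).2])%E) ->
  alpha < \sum_(k < K | nk k == 0%N) q k ->
  forall (Pi : 'I_K -> probability (X1 * R)%type R)
         (dO : measure_display) (O : measurableType dO) (P : probability O R)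
         (Z : 'I_(ncal nk) -> O -> X1 * R) (G : O -> 'I_K) (Z0 : O -> X1 * R),
    data_model P Pi q Z G Z0 ->
    (\int[P]_w lebesgue_measure (C (lift_data (fun i => Z i w)) (G w, (Z0 w).1))
       = +oo)%E.
Proof.
move=> _ _ _ q_sum1 mC coverage alpha_lt Pi dO O P Z G Z0 model.
have mF := measurable_coverage_graph mC model.
under eq_integral do rewrite -xsection_coverage_graph.
rewrite integral_xsection_ysection //.
have := integral_ge_cst_pinfty (lebesgue_measureT R) _ _
  (coverage_ysection_ge q_sum1 mC coverage model).
apply; first by rewrite subr_gt0.
exact: measurable_fun_ysection.
Qed.
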